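(* Let $G=(V,E)$ be a finite, simple, undirected, connected graph, let $S\subseteq V$ be nonempty and let $\ell\geq 2$ be an integer. If $S$ is an $\{\ell\}$-resolving set of $G$, then for every vertex $x\in V$ and every nonempty set $Y\subseteq V$ with $x\notin Y$ and $|Y|\leq \ell-1$ there exists $s\in S$ such that $d(s,x)<d(s,Y)$.
   Context: $d(u,v)$ denotes the shortest-path distance in $G$, and for a nonempty $X\subseteq V$, $d(s,X)=\min_{x\in X} d(s,x)$. For $S=\{s_1,\dots,s_k\}\subseteq V$ and nonempty $X\subseteq V$, $\mathcal{D}_S(X)=(d(s_1,X),\dots,d(s_k,X))$. A set $S\subseteq V$ is an $\{\ell\}$-resolving set of $G$ if for all distinct nonempty sets $X,Y\subseteq V$ with $|X|\leq\ell$ and $|Y|\leq \ell$ we have $\mathcal{D}_S(X)\neq\mathcal{D}_S(Y)$. *)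

From mathcomp Require Import all_boot all_order.
Set Implicit Arguments. Unset Strict Implicit. Unset Printing Implicit Defensive.

Definition simple_graph (T : finType) (e : rel T) : Prop :=
  symmetric e /\ irreflexive e.

Definition connected_graph (T : finType) (e : rel T) : Prop :=
  forall u v : T, connect e u v.

Definition walk_len (T : finType) (e : rel T) (u v : T) (n : nat) : bool :=
  [exists p : n.-tuple T, path e u p && (last u p == v)].

(* shortest-path distance: least n with a walk of length n from u to v.
   In a connected graph such n exists and is < #|T|, so searching 0..#|T|-1 is exact. *)
Definition dist (T : finType) (e : rel T) (u v : T) : nat :=
  find (walk_len e u v) (iota 0 #|T|).

Definition dist_set (T : finType) (e : rel T) (s : T) (X : {set T}) : nat :=
  \big[minn/#|T|]_(x in X) dist e s x.

(* D_S(X) as the function s |-> d(s,X) on S *)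
Definition resolving_ell (T : finType) (e : rel T) (S : {set T}) (l : nat) : Prop :=
  forall X Y : {set T}, X != set0 -> Y != set0 -> #|X| <= l -> #|Y| <= l -> X != Y ->
    exists2 s, s \in S & dist_set e s X != dist_set e s Y.

From HB Require Import structures.
From mathcomp Require Import all_boot all_order.

(* If [d(s, Y) <= d(s, x)] held for every [s] in [S], adding [x] to [Y] would
   change no distance [d(s, Y)], so [S] would not distinguish [x |: Y] from [Y],
   two distinct nonempty sets of size at most [l]. *)

(* [minn] has no neutral element in [nat], so it is only a semigroup law; this
   is enough for the idempotent big-operator lemmas. *)
#[local] HB.instance Definition _ := SemiGroup.isComLaw.Build nat minn minnA minnC.

Lemma bigmin_setU1 (T : finType) (x : T) (Y : {set T}) (F : T -> nat) n :
  x \notin Y ->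
  \big[minn/n]_(i in x |: Y) F i = minn (F x) (\big[minn/n]_(i in Y) F i).
Proof.
move=> xNY.
rewrite (eq_bigl (fun i => i \in [predU pred1 x & Y])) => [|i]; last by rewrite !inE.
rewrite bigU_idem /=; last 2 first.
- exact: minnn.
- by rewrite disjoint1.
rewrite (big_pred1_id _ _ _ (frefl _)) -minnA [minn n _]minnC.
by congr minn; apply: big_id_idem; apply: minnn.
Qed.

Lemma dist_setU1 (T : finType) (e : rel T) (s x : T) (Y : {set T}) :
  x \notin Y -> dist_set e s (x |: Y) = minn (dist e s x) (dist_set e s Y).
Proof. exact: bigmin_setU1. Qed.

Lemma dist_setU1_id (T : finType) (e : rel T) (s x : T) (Y : {set T}) :
  x \notin Y -> dist_set e s Y <= dist e s x ->
  dist_set e s (x |: Y) = dist_set e s Y.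
Proof. by move=> xNY le_Yx; rewrite dist_setU1 // minnC; apply/minn_idPl. Qed.

Theorem mainTheorem2 (T : finType) (e : rel T) (S : {set T}) (l : nat) :
  simple_graph e -> connected_graph e -> S != set0 -> 2 <= l ->
  resolving_ell e S l ->
  forall (x : T) (Y : {set T}), Y != set0 -> x \notin Y -> #|Y| <= l - 1 ->
    exists2 s, s \in S & dist e s x < dist_set e s Y.
Proof.
move=> _ _ _ l_ge2 resS x Y Y_neq0 xNY card_Y.
have xY_neq0 : x |: Y != set0 by apply/set0Pn; exists x; rewrite setU11.
have card_xY : #|x |: Y| <= l.
  by rewrite cardsU1 xNY add1n (leq_ltn_trans card_Y) // subn1 ltn_predL ltnW.
have card_Y' : #|Y| <= l by rewrite (leq_trans card_Y) ?leq_subr.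
have xY_neqY : x |: Y != Y by apply: contraNneq xNY => <-; rewrite setU11.
have [s sS dist_neq] := resS _ _ xY_neq0 Y_neq0 card_xY card_Y' xY_neqY.
exists s => //; rewrite ltnNge; apply: contra_neqN dist_neq => le_Yx.
exact: dist_setU1_id.
Qed.
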